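(* Fix a positive integer $n$, a nonzero $n$-partition $\lambda$ with $\lambda_n=0$, and an $n$-semistandard tableau $T$ of shape $\lambda$. Let $w^1\le\dots\le w^{\lambda_1}$ be the minimal defining chain for $T$, and let $\pi^{(j,1)}$, $1\le j\le\lambda_1$, be the permutations produced by the greedy procedure. Then $w^j=\pi^{(j,1)}$ for $1\le j\le\lambda_1$.
   Context: Let $\lambda=(\lambda_1,\dots,\lambda_n)$ be weakly decreasing nonnegative integers with $\lambda_n=0$, $\lambda\ne0$, identified with its Young diagram; $c_j$ is the length of column $j$. Write $(j,i)$ for the box in column $j$, row $i$. Reading order: $(l,k)\le(j,i)$ iff $l<j$, or $l=j$ and $k\ge i$; convention $(j,c_j+1)$ means $(j-1,1)$. An $n$-semistandard tableau $T$ of shape $\lambda$ has entries in $[n]$, weakly increasing along rows, strictly increasing down columns; $T(j,i)$ is its entry and $C_j$ its $j$-th column. Permutations are in one-line form, compared in the Bruhat order. A defining chain for $T$ is a sequence $w^1\le\dots\le w^{\lambda_1}$ in Bruhat order of permutations such that for each $j$, $\{w^j_1,\dots,w^j_{c_j}\}$ is the set of entries of $C_j$. The minimal defining chain is the (existing, by a result of Deodhar) defining chain $w^1\le\dots\le w^{\lambda_1}$ such that for every defining chain $v^1\le\dots\le v^{\lambda_1}$ one has $w^j\le v^j$ for all $j$. Greedy procedure: $\pi^{(1,1)}$ has first $c_1$ entries those of $C_1$ increasing, followed by the rest of $[n]$ increasing. For $(j,i)$ with $j\ge2$ in reading order from $(2,c_2)$ to $(\lambda_1,1)$, define $\pi^{(j,i)}$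 from $\pi:=\pi^{(j,i+1)}$: if $T(j-1,i)=T(j,i)$ set $\pi^{(j,i)}=\pi$; otherwise let $i_0=i$, and given $i_{x-1}$ with $\pi_{i_{x-1}}<T(j,i)$ let $i_x$ be the smallest index $>c_j$ with $\pi_{i_{x-1}}<\pi_{i_x}\le T(j,i)$, stopping at $i_m$ with $\pi_{i_m}=T(j,i)$; set $\pi^{(j,i)}_{i_x}=\pi_{i_{x-1}}$ ($1\le x\le m$), $\pi^{(j,i)}_{i_0}=\pi_{i_m}$, others unchanged. *)

From mathcomp Require Import all_boot all_fingroup.
Set Implicit Arguments. Unset Strict Implicit. Unset Printing Implicit Defensive.

(* Conventions: rows i and columns j are 1-indexed naturals.
   A shape lambda is a seq nat of size n, lambda_i = nth 0 lambda i.-1.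
   A tableau is T : nat -> nat -> nat, T j i = entry in column j, row i
   (values outside the diagram are irrelevant).
   A permutation w : 'S_n has one-line form w_1..w_n with w_k = (w (k-1)).+1
   (positions and values of 'I_n are shifted by one). *)

Definition lam (la : seq nat) (i : nat) : nat := nth 0 la i.-1.

Definition collen (la : seq nat) (j : nat) : nat := count (fun x => j <= x) la.

Definition lam1 (la : seq nat) : nat := head 0 la.

Definition good_shape (n : nat) (la : seq nat) : Prop :=
  [/\ size la = n, sorted geq la, lam la n = 0 & lam1 la != 0].

Definition in_shape (la : seq nat) (j i : nat) : bool :=
  (1 <= i) && (1 <= j) && (j <= lam la i).

Definition semistandard (n : nat) (la : seq nat) (T : nat -> nat -> nat) : Prop :=
  [/\ forall j i, in_shape la j i -> 1 <= T j i <= n,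
      forall j i, in_shape la j.+1 i -> T j i <= T j.+1 i
    & forall j i, in_shape la j i.+1 -> T j i < T j i.+1].

Definition column (la : seq nat) (T : nat -> nat -> nat) (j : nat) : seq nat :=
  [seq T j i | i <- iota 1 (collen la j)].

Definition inv_len n (s : 'S_n) : nat :=
  #|[set ij : 'I_n * 'I_n | (ij.1 < ij.2) && (s ij.2 < s ij.1)]|.

Definition bruhat_step n (u v : 'S_n) : Prop :=
  exists a b : 'I_n, a != b /\ (forall x, v x = u (tperm a b x)) /\
                     inv_len u < inv_len v.

Inductive bruhat_le n : 'S_n -> 'S_n -> Prop :=
| bruhat_refl u : bruhat_le u u
| bruhat_trans u v w : bruhat_step u v -> bruhat_le v w -> bruhat_le u w.

Definition oneline n (w : 'S_n) : seq nat := [seq (val (w k)).+1 | k <- enum 'I_n].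

Definition first_entries n (w : 'S_n) (c : nat) : seq nat :=
  [seq (val (w k)).+1 | k <- enum 'I_n & val k < c].

Definition defining_chain n (la : seq nat) (T : nat -> nat -> nat)
    (w : nat -> 'S_n) : Prop :=
  (forall j, 1 <= j -> j < lam1 la -> bruhat_le (w j) (w j.+1)) /\
  (forall j, 1 <= j <= lam1 la ->
     first_entries (w j) (collen la j) =i column la T j).

Definition minimal_defining_chain n (la : seq nat) (T : nat -> nat -> nat)
    (w : nat -> 'S_n) : Prop :=
  defining_chain la T w /\
  forall v : nat -> 'S_n, defining_chain la T v ->
    forall j, 1 <= j <= lam1 la -> bruhat_le (w j) (v j).

(* permutations in one-line form as seq nat; pi_k = pos pi k, k 1-indexed *)
Definition pos (pi : seq nat) (k : nat) : nat := nth 0 pi k.-1.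

Definition next_idx (n : nat) (pi : seq nat) (c v t : nat) : option nat :=
  let s := iota c.+1 (n - c) in
  let r := find (fun k => (v < pos pi k) && (pos pi k <= t)) s in
  if r < size s then Some (nth 0 s r) else None.

(* the indices i_1, ..., i_m following cur, with fuel *)
Fixpoint idx_chain (n : nat) (pi : seq nat) (c t cur fuel : nat) : seq nat :=
  match fuel with
  | 0 => [::]
  | fuel'.+1 =>
    if pos pi cur == t then [::] else
    match next_idx n pi c (pos pi cur) t with
    | Some k => k :: idx_chain n pi c t k fuel'
    | None => [::]
    end
  end.

Definition set_pos (pi : seq nat) (kv : nat * nat) : seq nat :=
  set_nth 0 pi kv.1.-1 kv.2.

(* pi^{(j,i)} from pi = pi^{(j,i+1)} *)
Definition greedy_step (n : nat) (la : seq nat) (T : nat -> nat -> nat)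
    (j : nat) (pi : seq nat) (i : nat) : seq nat :=
  if T j.-1 i == T j i then pi else
  let idxs := i :: idx_chain n pi (collen la j) (T j i) i n in
  let vals := [seq pos pi k | k <- idxs] in
  (* pi'_{i_x} = pi_{i_{x-1}} (x >= 1), pi'_{i_0} = pi_{i_m} *)
  foldl set_pos pi (zip idxs (rotr 1 vals)).

Definition greedy_init (n : nat) (la : seq nat) (T : nat -> nat -> nat) : seq nat :=
  let C1 := column la T 1 in
  sort leq C1 ++ sort leq [seq k <- iota 1 n | k \notin C1].

Definition greedy_col (n : nat) (la : seq nat) (T : nat -> nat -> nat)
    (j : nat) (pi : seq nat) : seq nat :=
  foldl (greedy_step n la T j) pi (rev (iota 1 (collen la j))).

(* greedy n la T j = pi^{(j,1)} for j >= 1 *)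
Fixpoint greedy (n : nat) (la : seq nat) (T : nat -> nat -> nat) (j : nat)
  : seq nat :=
  match j with
  | 0 => greedy_init n la T
  | 1 => greedy_init n la T
  | j'.+1 => greedy_col n la T j (greedy n la T j')
  end.

From mathcomp Require Import all_boot all_fingroup.
From mathcomp Require Import zify.
Set Implicit Arguments. Unset Strict Implicit. Unset Printing Implicit Defensive.

(* Compare permutations through their rank functions
   r_w(k, a) = #{i <= k | w_i >= a}.  A Bruhat step (a transposition raising
   the length) can only increase r, so w <= v in the Bruhat order implies
   r_w <= r_v pointwise, and a permutation is determined by r.  Each greedy
   step is a sequence of length-raising transpositions, so the greedy
   permutations form a defining chain, whence r_w <= r_pi by minimality of w.
   Conversely, every such transposition keeps r_pi below r_v for any v whose
   first c_j entries form C_j and which lies above the previous greedy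
   permutation; by induction along any defining chain this gives
   r_pi <= r_w. *)

(** * Length of a transposition *)

Section LengthOfTransposition.
Variables (n : nat) (u v : 'S_n) (a b : 'I_n).
Hypotheses (lt_ab : a < b) (lt_uab : u a < u b) (vE : forall x, v x = u (tperm a b x)).

Definition inversions (s : 'S_n) :=
  [set ij : 'I_n * 'I_n | (ij.1 < ij.2) && (s ij.2 < s ij.1)].

Local Notation t := (tperm a b).

(* An inversion (x, y) of u becomes the inversion (t x, t y) of v, reordered if
   necessary; the inversion (a, b) of v is never reached. *)
Let relabel (ij : 'I_n * 'I_n) := if t ij.1 < t ij.2 then (t ij.1, t ij.2) else ij.

Let relabel_inj : {in inversions u &, injective relabel}.
Proof.
move=> [x y] [x' y']; rewrite !inE /relabel /= => /andP[xy _] /andP[xy' _].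
case: ifP => h1; case: ifP => h2 [e1 e2].
- by rewrite -(tpermK a b x) -(tpermK a b y) e1 e2 !tpermK.
- by move: h2; rewrite -e1 -e2 !tpermK xy.
- by move: h1; rewrite e1 e2 !tpermK xy'.
- by rewrite e1 e2.
Qed.

Let unflipped_inversion (x y : 'I_n) : x < y -> u y < u x -> ~~ (t x < t y) -> u (t y) < u (t x).
Proof.
move=> xy uxy; case: tpermP => [ex|ex|xa xb]; case: tpermP => [ey|ey|ya yb];
  subst; rewrite -?leqNgt; try lia.
Qed.

Let relabel_sub : relabel @: inversions u \subset inversions v.
Proof.
apply/subsetP => _ /imsetP[[x y] + ->]; rewrite !inE /relabel /= => /andP[xy uxy].
case: ifP => h /=; first by rewrite h /= !vE !tpermK.
by rewrite xy !vE unflipped_inversion ?h.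
Qed.

Let new_inversion : (a, b) \in inversions v :\: relabel @: inversions u.
Proof.
rewrite in_setD inE /= lt_ab !vE tpermL tpermR lt_uab andbT andbT.
apply/imsetP => -[[x y]]; rewrite inE /relabel /= => /andP[xy uxy].
case: ifP => h [e1 e2]; last by move: uxy; rewrite -e1 -e2; lia.
by move: xy; rewrite -(tpermK a b x) -(tpermK a b y) -e1 -e2 tpermL tpermR; lia.
Qed.

Lemma inv_len_tperm : inv_len u < inv_len v.
Proof.
rewrite /inv_len -/(inversions u) -/(inversions v) -(card_in_imset relabel_inj).
apply: proper_card; rewrite properEneq relabel_sub andbT.
by apply/eqP => e; move: new_inversion; rewrite e setDv inE.
Qed.

End LengthOfTransposition.

(** * Permutations as sequences and their rank functions *)

Definition is_perm_seq n (s : seq nat) := perm_eq s (iota 1 n).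

Section PermSeq.
Variables (n : nat) (s : seq nat).
Hypothesis s_perm : is_perm_seq n s.

Lemma size_perm_seq : size s = n.
Proof. by rewrite (perm_size s_perm) size_iota. Qed.

Lemma perm_seq_uniq : uniq s.
Proof. by rewrite (perm_uniq s_perm) iota_uniq. Qed.

Lemma mem_perm_seq x : (x \in s) = (0 < x <= n).
Proof. by rewrite (perm_mem s_perm) mem_iota; lia. Qed.

Lemma perm_seq_nth k : k < n -> 0 < nth 0 s k <= n.
Proof. by move=> kn; rewrite -mem_perm_seq mem_nth ?size_perm_seq. Qed.

End PermSeq.

Lemma size_oneline n (w : 'S_n) : size (oneline w) = n.
Proof. by rewrite size_map size_enum_ord. Qed.

Lemma nth_oneline n (w : 'S_n) (k : 'I_n) : nth 0 (oneline w) k = (w k).+1.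
Proof. by rewrite (nth_map k) ?size_enum_ord // nth_ord_enum. Qed.

Lemma oneline_inj n : injective (@oneline n).
Proof.
move=> u v e; apply/permP => x; apply/val_inj.
by have := congr1 (nth 0 ^~ x) e; rewrite /= !nth_oneline; case.
Qed.

Lemma oneline_perm_seq n (w : 'S_n) : is_perm_seq n (oneline w).
Proof.
apply: uniq_perm; [|exact: iota_uniq|].
- by rewrite map_inj_uniq ?enum_uniq // => x y [] /val_inj /perm_inj.
- move=> x; rewrite mem_iota; apply/mapP/idP => [[k _ ->]|hx].
    by have := ltn_ord (w k); rewrite /val /=; lia.
  have hx' : x.-1 < n by lia.
  by exists ((w^-1)%g (Ordinal hx')); rewrite ?mem_enum // permKV /=; lia.
Qed.

(* The identity when s is not a permutation of 1..n. *)
Definition perm_of_seq n (s : seq nat) : 'S_n :=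
  odflt 1%g [pick p : 'S_n | [forall x, val (p x) == (nth 0 s x).-1]].

Lemma perm_of_seqK n s : is_perm_seq n s -> oneline (perm_of_seq n s) = s.
Proof.
move=> hs; pose f (x : 'I_n) : 'I_n := insubd x (nth 0 s x).-1.
have fE x : val (f x) = (nth 0 s x).-1.
  by rewrite val_insubd; have := perm_seq_nth hs (ltn_ord x); case: ifP => //; lia.
have f_inj : injective f.
  move=> x y /(congr1 val); rewrite !fE => e; apply/val_inj/eqP.
  have := perm_seq_nth hs (ltn_ord x); have := perm_seq_nth hs (ltn_ord y) => hx hy.
  rewrite -(nth_uniq 0 _ _ (perm_seq_uniq hs)) ?(size_perm_seq hs) ?ltn_ord //.
  by apply/eqP; rewrite /val /=; lia.
have spec x : val (perm_of_seq n s x) = (nth 0 s x).-1.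
  rewrite /perm_of_seq; case: pickP => [p /forallP/(_ x)/eqP //|none].
  by have /forallP[] := none (perm f_inj); move=> y; rewrite permE fE.
apply: (@eq_from_nth _ 0); rewrite size_oneline ?(size_perm_seq hs) // => k kn.
by rewrite (nth_oneline _ (Ordinal kn)) spec /=; have := perm_seq_nth hs kn; lia.
Qed.

Lemma count_nth_le (a : pred nat) (s : seq nat) p : p < size s ->
  a (nth 0 s p) <= count a s.
Proof.
move=> ps; case h: (a _) => //; rewrite -has_count; apply/hasP.
by exists (nth 0 s p) => //; apply: mem_nth.
Qed.

Definition pos_swap (s : seq nat) a b := set_nth 0 (set_nth 0 s a.-1 (pos s b)) b.-1 (pos s a).

Lemma pos_swapE s a b q : 0 < a -> 0 < b -> 0 < q ->
  pos (pos_swap s a b) q = if q == b then pos s a else if q == a then pos s b else pos s q.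
Proof.
move=> ha hb hq; rewrite /pos_swap /pos !nth_set_nth /=.
rewrite (_ : (q.-1 == b.-1) = (q == b)); last by apply/eqP/eqP; lia.
by rewrite nth_set_nth /= (_ : (q.-1 == a.-1) = (q == a)) //; apply/eqP/eqP; lia.
Qed.

Lemma size_pos_swap s a b : 0 < a <= size s -> 0 < b <= size s -> size (pos_swap s a b) = size s.
Proof. by move=> ha hb; rewrite !size_set_nth; lia. Qed.

Lemma perm_pos_swap s a b : 0 < a <= size s -> 0 < b <= size s -> perm_eq (pos_swap s a b) s.
Proof.
move=> ha hb; apply/seq.permP => p; rewrite /pos_swap /pos.
have a_lt : a.-1 < size s by lia.
have b_lt : b.-1 < size (set_nth 0 s a.-1 (nth 0 s b.-1)) by rewrite size_set_nth; lia.
have e : nth 0 (set_nth 0 s a.-1 (nth 0 s b.-1)) b.-1 = nth 0 s b.-1.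
  by rewrite nth_set_nth /=; case: eqP => // ->.
rewrite count_set_nth_ltn // e count_set_nth_ltn //.
have := count_nth_le p a_lt; have := count_nth_le p b_lt; rewrite e.
have := count_nth_le p (_ : b.-1 < size s) => /(_ ltac:(lia)).
rewrite count_set_nth_ltn //.
case: (p (nth 0 s a.-1)); case: (p (nth 0 s b.-1)); simpl; lia.
Qed.

Lemma perm_seq_pos_swap n s a b : is_perm_seq n s -> 0 < a <= n -> 0 < b <= n ->
  is_perm_seq n (pos_swap s a b).
Proof.
move=> hs ha hb; have sz := size_perm_seq hs.
by apply: perm_trans hs; apply: perm_pos_swap; rewrite sz.
Qed.

Lemma oneline_mul_tperm n (u : 'S_n) (a b : 'I_n) :
  oneline (tperm a b * u)%g = pos_swap (oneline u) a.+1 b.+1.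
Proof.
apply: (@eq_from_nth _ 0) => [|k]; rewrite size_oneline.
  by rewrite size_pos_swap size_oneline; have := ltn_ord a; have := ltn_ord b; lia.
move=> kn; rewrite -[nth 0 (pos_swap _ _ _) _]/(pos _ k.+1) pos_swapE // /pos /=.
rewrite !(nth_oneline _ (Ordinal kn)) !nth_oneline permM !eqSS.
set i := Ordinal kn; rewrite -[k]/(val i) !(inj_eq val_inj).
case: tpermP => [->|->|ia ib]; rewrite ?eqxx //.
- by case: eqP => [->|].
- by move/eqP/negbTE: ia ->; move/eqP/negbTE: ib ->.
Qed.

Lemma bruhat_step_pos_swap n rho a b : is_perm_seq n rho -> 0 < a < b -> b <= n ->
  pos rho a < pos rho b -> bruhat_step (perm_of_seq n rho) (perm_of_seq n (pos_swap rho a b)).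
Proof.
move=> hrho hab hbn lt_ab; set u := perm_of_seq n rho.
have a_lt : a.-1 < n by lia.
have b_lt : b.-1 < n by lia.
set a' := Ordinal a_lt; set b' := Ordinal b_lt.
have posE (c : 'I_n) : nth 0 rho c = (u c).+1 by rewrite -nth_oneline perm_of_seqK.
have vE : perm_of_seq n (pos_swap rho a b) = (tperm a' b' * u)%g.
  apply: oneline_inj; rewrite oneline_mul_tperm /u !perm_of_seqK /= ?prednK //.
  1-2: lia.
  by apply: perm_seq_pos_swap; lia.
exists a', b'; split; first by apply/eqP => /(congr1 val) /=; lia.
split=> [x|]; first by rewrite vE permM.
apply: (@inv_len_tperm _ _ _ a' b') => [/=||x]; first lia.
- by move: lt_ab; rewrite /pos -[a.-1]/(val a') -[b.-1]/(val b') !posE.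
- by rewrite vE permM.
Qed.

Definition rank_ge (s : seq nat) k x := count (fun y => x <= y) (take k s).

Definition dominated (s1 s2 : seq nat) := forall k x, rank_ge s1 k x <= rank_ge s2 k x.

Lemma dominated_refl s : dominated s s.
Proof. by []. Qed.

Lemma dominated_trans s1 s2 s3 : dominated s1 s2 -> dominated s2 s3 -> dominated s1 s3.
Proof. by move=> h1 h2 k x; apply: leq_trans (h1 k x) (h2 k x). Qed.

Lemma rank_geS s k x : k < size s -> rank_ge s k.+1 x = rank_ge s k x + (x <= nth 0 s k).
Proof. by move=> ks; rewrite /rank_ge (take_nth 0 ks) -cats1 count_cat /= addn0. Qed.

Lemma dominated_antisym s1 s2 : size s1 = size s2 ->
  dominated s1 s2 -> dominated s2 s1 -> s1 = s2.
Proof.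
move=> sz h12 h21; apply: (@eq_from_nth _ 0) => // k ks.
have e x : (x <= nth 0 s1 k) = (x <= nth 0 s2 k).
  move: (h12 k.+1 x) (h21 k.+1 x) (h12 k x) (h21 k x); rewrite !rank_geS -?sz //.
  by case: (x <= nth 0 s1 k); case: (x <= nth 0 s2 k); lia.
by apply/eqP; rewrite eqn_leq -e leqnn e leqnn.
Qed.

Lemma take_set_nth (s : seq nat) p y k : p < size s ->
  take k (set_nth 0 s p y) = if p < k then set_nth 0 (take k s) p y else take k s.
Proof.
move=> ps; have mx : maxn p.+1 (size s) = size s by apply/maxn_idPr.
apply: (@eq_from_nth _ 0) => [|q].
  case: ifP => pk; rewrite ?size_set_nth !size_take ?size_set_nth mx //.
  by case: ifP => ks; apply/esym/maxn_idPr; lia.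
rewrite size_take size_set_nth mx => qs.
have qk : q < k by move: qs; case: ifP; lia.
case: ifP => pk; first by rewrite nth_take // !nth_set_nth /= nth_take.
by rewrite nth_take // nth_take // nth_set_nth /=; case: eqP => // qp; lia.
Qed.

Lemma rank_ge_set_nth s p y k x : p < size s ->
  rank_ge (set_nth 0 s p y) k x + (p < k) * (x <= nth 0 s p) =
  rank_ge s k x + (p < k) * (x <= y).
Proof.
move=> ps; rewrite /rank_ge take_set_nth //.
case: ifP => pk; rewrite ?mul0n ?mul1n ?addn0 //.
have pt : p < size (take k s) by rewrite size_take; case: ifP; lia.
rewrite count_set_nth_ltn // nth_take //.
by have := count_nth_le (fun z => x <= z) pt; rewrite nth_take //=; lia.
Qed.

Lemma rank_ge_pos_swap s a b k x : 0 < a < b -> b <= size s -> pos s a < pos s b ->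
  rank_ge (pos_swap s a b) k x = rank_ge s k x + ((a <= k < b) && (pos s a < x <= pos s b)).
Proof.
move=> ab bs lt_ab.
have e : nth 0 (set_nth 0 s a.-1 (pos s b)) b.-1 = pos s b.
  by rewrite nth_set_nth /=; case: eqP => //; lia.
have h1 := @rank_ge_set_nth s a.-1 (pos s b) k x ltac:(lia).
have h2 := @rank_ge_set_nth (set_nth 0 s a.-1 (pos s b)) b.-1 (pos s a) k x
  ltac:(rewrite size_set_nth; lia).
rewrite e in h2; rewrite /pos_swap; move: h1 h2 lt_ab; rewrite /pos.
case: (leqP a k); case: (leqP b k); case: (leqP x (nth 0 s a.-1));
  case: (leqP x (nth 0 s b.-1)); simpl; lia.
Qed.

Lemma bruhat_step_dominated n (u v : 'S_n) :
  bruhat_step u v -> dominated (oneline u) (oneline v).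
Proof.
move=> [a [b [neq_ab [vE lt_uv]]]].
wlog lt_ab : a b neq_ab vE / a < b.
  move=> W; case: (ltngtP a b) => [|lt_ba|/val_inj eq_ab]; first exact: W.
  - by apply: (W b a) => // [|x]; rewrite 1?eq_sym // tpermC.
  - by rewrite eq_ab eqxx in neq_ab.
have lt_uab : u a < u b.
  case: (ltngtP (u a) (u b)) => // [lt_uba|/val_inj/perm_inj eq_ab].
    have uE x : u x = v (tperm a b x) by rewrite vE tpermK.
    have := inv_len_tperm lt_ab _ uE; rewrite !vE tpermL tpermR => /(_ lt_uba); lia.
  by rewrite eq_ab eqxx in neq_ab.
have -> : v = (tperm a b * u)%g by apply/permP => x; rewrite vE permM.
move=> k x; rewrite oneline_mul_tperm rank_ge_pos_swap ?size_oneline //; first lia.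
by rewrite /pos /= !nth_oneline.
Qed.

Lemma bruhat_le_dominated n (u v : 'S_n) :
  bruhat_le u v -> dominated (oneline u) (oneline v).
Proof.
elim=> [w|w1 w2 w3 h12 _ h23]; first exact: dominated_refl.
exact: dominated_trans (bruhat_step_dominated h12) h23.
Qed.

Lemma bruhat_le_trans n (u v w : 'S_n) : bruhat_le u v -> bruhat_le v w -> bruhat_le u w.
Proof. by elim=> // x y z h _ ih /ih; apply: bruhat_trans h. Qed.

(** * The greedy step as a sequence of transpositions *)

Lemma next_idx_some n pi c v t k : next_idx n pi c v t = Some k ->
  [/\ c < k <= n, v < pos pi k <= t &
      forall q, c < q < k -> ~~ ((v < pos pi q) && (pos pi q <= t))].
Proof.
rewrite /next_idx; set s := iota _ _; set p := fun k => _.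
case: ifP => // found [<-].
have nth_s i : i < n - c -> nth 0 s i = c.+1 + i by move=> hi; rewrite nth_iota.
have lt_find : find p s < n - c by rewrite size_iota in found.
rewrite nth_s //; split; first lia.
  by have := nth_find 0 (_ : has p s); rewrite nth_s // has_find; apply.
move=> q hq; have := @before_find _ 0 p s (q - c.+1) ltac:(lia).
by rewrite nth_s ?subnKC /p; [move=> ->|lia|lia].
Qed.

Lemma next_idx_none n pi c v t : next_idx n pi c v t = None ->
  forall q, c < q <= n -> ~~ ((v < pos pi q) && (pos pi q <= t)).
Proof.
rewrite /next_idx; case: ifP => // + _ q hq.
rewrite -has_find => /negbT/hasPn; apply; rewrite mem_iota; lia.
Qed.

Fixpoint greedy_swaps n c t r f (rho : seq nat) : seq nat :=
  if f is f'.+1 then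
    if pos rho r == t then rho else
    if next_idx n rho c (pos rho r) t is Some k
    then greedy_swaps n c t r f' (pos_swap rho r k) else rho
  else rho.

Lemma set_nth_nth (s : seq nat) p : p < size s -> set_nth 0 s p (nth 0 s p) = s.
Proof.
move=> ps; apply: (@eq_from_nth _ 0) => [|q _]; first by rewrite size_set_nth; apply/maxn_idPr.
by rewrite nth_set_nth /=; case: eqP => // ->.
Qed.

Section CyclicShiftAsSwaps.
Variables (n : nat) (pi : seq nat) (r c t : nat).
Hypothesis r_range : 0 < r <= c.

Definition shifted (rho : seq nat) (cur : nat) (ks : seq nat) :=
  foldl set_pos rho
    ((r, pos pi (last cur ks)) :: zip ks (belast (pos pi cur) (map (pos pi) ks))).

Let shifted_nil rho cur : r <= size rho -> pos rho r = pos pi cur -> rho = shifted rho cur [::].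
Proof. by move=> hsz hcur; rewrite /shifted /= /set_pos /= -hcur set_nth_nth //; lia. Qed.

(* Swapping position r successively with i_1, ..., i_m realizes the cyclic
   shift of the greedy step.  The swaps so far only moved values at most
   pos pi cur, so the next index is the same whether searched in rho or in pi. *)
Lemma greedy_swaps_shifted f : forall rho cur, r <= size rho -> pos rho r = pos pi cur ->
  (forall q, c < q -> pos rho q != pos pi q ->
     (pos pi q <= pos pi cur) && (pos rho q <= pos pi cur)) ->
  greedy_swaps n c t r f rho = shifted rho cur (idx_chain n pi c t cur f).
Proof.
elim: f => [|f ih] rho cur hsz hcur hdiff /=; first exact: shifted_nil.
rewrite hcur; case: eqP => [_|ne_t]; first exact: shifted_nil.
have -> : next_idx n rho c (pos pi cur) t = next_idx n pi c (pos pi cur) t.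
  rewrite /next_idx (@eq_in_find _ _ (fun k => (pos pi cur < pos pi k) && (pos pi k <= t))) //.
  move=> q; rewrite mem_iota => hq.
  case: (eqVneq (pos rho q) (pos pi q)) => [->//|/(hdiff q ltac:(lia))/andP[h1 h2]].
  by rewrite !ltnNge h1 h2.
case hk: next_idx => [k|]; last exact: shifted_nil.
have [/andP[ck kn] /andP[lt_k le_kt] _] := next_idx_some hk.
have rhoE : pos rho k = pos pi k.
  by apply/eqP; apply: contraT => /(hdiff k ltac:(lia))/andP[h1 _]; lia.
have ne_rk : (r == k) = false by apply/eqP; lia.
rewrite (ih _ k); first last.
- move=> q hq; rewrite pos_swapE; try lia.
  case: (eqVneq q k) => [->|ne_qk]; first by rewrite hcur => _; apply/andP; lia.
  rewrite ifN; last by apply/eqP; lia.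
  by move=> /(hdiff q hq)/andP[h1 h2]; apply/andP; lia.
- by rewrite pos_swapE ?eqxx ?ne_rk //; lia.
- by rewrite /pos_swap !size_set_nth; lia.
rewrite /shifted /= /pos_swap /set_pos /= set_set_nth ifN; last by apply/eqP; lia.
by rewrite [in X in set_nth 0 X k.-1 _]set_set_nth eqxx hcur.
Qed.

End CyclicShiftAsSwaps.

Lemma greedy_step_swaps n la T j pi r : 0 < r <= collen la j -> r <= size pi ->
  pos pi r = T j.-1 r ->
  greedy_step n la T j pi r = greedy_swaps n (collen la j) (T j r) r n pi.
Proof.
move=> hr hsz hpos; rewrite /greedy_step.
case: eqP => [e|_]; first by case: n => //= n; rewrite hpos e eqxx.
rewrite (@greedy_swaps_shifted _ pi _ _ _ hr _ _ r hsz) // => [|q]; last by rewrite eqxx.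
by rewrite /shifted map_cons (lastI (pos pi r)) rotr1_rcons last_map.
Qed.

Lemma mem_take_pos (s : seq nat) k x : x \in take k s ->
  exists2 q, 0 < q <= minn k (size s) & pos s q = x.
Proof.
move=> /(nthP 0)[i]; rewrite size_take_min => hi <-.
exists i.+1; rewrite ?nth_take //; lia.
Qed.

Lemma count_gt_lt_count_ge (s : seq nat) a t : a <= t -> t \in s ->
  count (fun x => t < x) s < count (fun x => a <= x) s.
Proof.
move=> le_at; elim: s => //= y s ih; rewrite in_cons => /orP[/eqP <-|/ih].
  by rewrite ltnn le_at ltnS; apply: sub_count => x /=; lia.
by case: (ltnP t y); case: (leqP a y); lia.
Qed.

Section GreedySwaps.
Variables (n c r t : nat).
Hypotheses (r_range : 0 < r <= c) (c_le_n : c <= n) (t_range : 0 < t <= n).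

Definition swap_ready (rho : seq nat) :=
  [/\ is_perm_seq n rho, pos rho r <= t,
      forall q, 0 < q < r -> pos rho q < pos rho r
    & forall q, r < q <= c -> t < pos rho q].

Lemma swap_ready_next_idx rho : swap_ready rho -> pos rho r < t ->
  exists k, next_idx n rho c (pos rho r) t = Some k.
Proof.
case=> hrho _ below above lt_rt; case hk: next_idx => [k|]; first by exists k.
have /(nthP 0)[p pn pE] : t \in rho by rewrite (mem_perm_seq hrho).
rewrite (size_perm_seq hrho) in pn; have tE : pos rho p.+1 = t by [].
case: (ltngtP p.+1 r) => [lt_pr|lt_rp|eq_pr]; first by have := below p.+1; lia.
- case: (leqP p.+1 c) => [le_pc|lt_cp]; first by have := above p.+1; lia.
  by have := @next_idx_none _ _ _ _ _ hk p.+1 ltac:(lia); rewrite tE lt_rt leqnn.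
- by move: lt_rt; rewrite -eq_pr tE ltnn.
Qed.

Lemma swap_ready_pos_swap rho k : swap_ready rho ->
  next_idx n rho c (pos rho r) t = Some k ->
  [/\ swap_ready (pos_swap rho r k), pos (pos_swap rho r k) r = pos rho k
    & forall q, 0 < q <= c -> q != r -> pos (pos_swap rho r k) q = pos rho q].
Proof.
case=> hrho _ below above hk; have [/andP[ck kn] /andP[lt_rk le_kt] _] := next_idx_some hk.
have posE q : 0 < q -> q != k -> pos (pos_swap rho r k) q = if q == r then pos rho k else pos rho q.
  by move=> hq /negbTE qk; rewrite pos_swapE ?qk //; lia.
have rE : pos (pos_swap rho r k) r = pos rho k by rewrite posE ?eqxx //; [lia|apply/eqP; lia].
have others q : 0 < q <= c -> q != r -> pos (pos_swap rho r k) q = pos rho q.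
  by move=> hq /negbTE qr; rewrite posE ?qr //; [lia|apply/eqP; lia].
split=> //; split; rewrite ?rE //.
- by apply: perm_seq_pos_swap; lia.
- by move=> q hq; rewrite others; [have := below q hq; lia|lia|apply/eqP; lia].
- by move=> q hq; rewrite others; [apply: above|lia|apply/eqP; lia].
Qed.

Lemma greedy_swaps_spec f rho : swap_ready rho -> t - pos rho r <= f ->
  [/\ is_perm_seq n (greedy_swaps n c t r f rho),
      forall q, 0 < q <= c -> q != r -> pos (greedy_swaps n c t r f rho) q = pos rho q,
      pos (greedy_swaps n c t r f rho) r = t &
      bruhat_le (perm_of_seq n rho) (perm_of_seq n (greedy_swaps n c t r f rho))].
Proof.
elim: f rho => [|f ih] rho ready hf /=.
  by case: ready => hrho le_rt _ _; split=> //; [lia|constructor].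
case: eqP => [eq_rt|ne_rt]; first by case: ready; split=> //; constructor.
have [k hk] := swap_ready_next_idx ready ltac:(case: ready; lia).
rewrite hk; have [ready' rE others] := swap_ready_pos_swap ready hk.
have [/andP[ck kn] /andP[lt_rk _] _] := next_idx_some hk.
have [hperm hothers hr hle] := ih _ ready' ltac:(rewrite rE; lia).
split=> // [q hq qr|]; first by rewrite hothers // others.
apply: bruhat_trans hle; apply: bruhat_step_pos_swap; case: ready => //; lia.
Qed.

Lemma rank_ge_swap_ready_prefix rho k a : swap_ready rho -> r <= k -> pos rho r < a ->
  rank_ge rho k a <= k - r.
Proof.
case=> _ _ below _ le_rk lt_ra.
rewrite /rank_ge -(cat_take_drop r (take k rho)) count_cat take_takel //.
have -> : count (fun x => a <= x) (take r rho) = 0.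
  apply/eqP; rewrite -leqn0 leqNgt -has_count; apply/hasPn => _ /mem_take_pos[q hq <-].
  rewrite -ltnNge; case: (ltngtP q r) => [lt_qr|lt_rq|-> //]; last lia.
  by have := below q ltac:(lia); lia.
by rewrite add0n (leq_trans (count_size _ _)) // size_drop size_take_min; lia.
Qed.

Lemma rank_ge_column_prefix u k a : is_perm_seq n u -> k <= c -> a <= t ->
  count (fun x => x < t) (take c u) <= r.-1 -> k - r.-1 <= rank_ge u k a.
Proof.
move=> hu le_kc le_at small.
have := count_predC (fun x => a <= x) (take k u).
rewrite size_take_min (size_perm_seq hu) /rank_ge.
suff : count (predC (fun x => a <= x)) (take k u) <= r.-1 by lia.
apply: leq_trans small; rewrite -(take_takel u le_kc).
apply: (@leq_trans (count (fun x => x < t) (take k (take c u)))).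
  by apply: sub_count => x /=; lia.
by rewrite -[X in _ <= count _ X](cat_take_drop k) count_cat leq_addr.
Qed.

Lemma rank_ge_swap_ready_beyond rho k k' a : swap_ready rho ->
  next_idx n rho c (pos rho r) t = Some k -> k' < k -> pos rho r < a <= t ->
  rank_ge rho k' a = rank_ge rho k' t.+1.
Proof.
case=> _ _ below above hk lt_k'k /andP[lt_ra le_at].
have [_ _ min_k] := next_idx_some hk.
apply: eq_in_count => _ /mem_take_pos[q hq <-] /=.
case: (ltngtP q r) => [lt_qr|lt_rq|->]; first by have := below q ltac:(lia); lia.
  case: (leqP q c) => [le_qc|lt_cq]; first by have := above q ltac:(lia); lia.
  by have := min_k q ltac:(lia); case: (ltnP (pos rho r) (pos rho q)); lia.
lia.
Qed.

Lemma dominated_pos_swap rho k u : swap_ready rho ->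
  next_idx n rho c (pos rho r) t = Some k ->
  is_perm_seq n u -> t \in take c u -> count (fun x => x < t) (take c u) <= r.-1 ->
  dominated rho u -> dominated (pos_swap rho r k) u.
Proof.
move=> ready hk hu tu small dom k' a.
have [/andP[ck kn] /andP[lt_rk le_kt] _] := next_idx_some hk.
have [hrho _ _ _] := ready.
rewrite rank_ge_pos_swap ?(size_perm_seq hrho); try lia.
case: andP => [[/andP[le_rk' lt_k'k] /andP[lt_ra le_ak]]|_]; last by rewrite addn0 dom.
case: (ltnP k' c) => [lt_k'c|le_ck'].
  have := rank_ge_swap_ready_prefix ready le_rk' lt_ra.
  have := rank_ge_column_prefix hu (ltnW lt_k'c) (leq_trans le_ak le_kt) small; lia.
rewrite (rank_ge_swap_ready_beyond ready hk lt_k'k) ?lt_ra ?(leq_trans le_ak) //.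
have := dom k' t.+1; have : rank_ge u k' t.+1 < rank_ge u k' a.
  apply: count_gt_lt_count_ge; first exact: leq_trans le_ak le_kt.
  by rewrite -(take_takel u le_ck') in tu; apply: mem_take tu.
lia.
Qed.

Lemma greedy_swaps_dominated f rho u : swap_ready rho ->
  is_perm_seq n u -> t \in take c u -> count (fun x => x < t) (take c u) <= r.-1 ->
  dominated rho u -> dominated (greedy_swaps n c t r f rho) u.
Proof.
move=> + hu tu small; elim: f rho => //= f ih rho ready dom.
case: eqP => // ne_rt; have [k hk] := swap_ready_next_idx ready ltac:(case: ready; lia).
have [ready' _ _] := swap_ready_pos_swap ready hk.
by rewrite hk; apply: ih ready' (dominated_pos_swap ready hk hu tu small dom).
Qed.

End GreedySwaps.

(** * Tableaux and the greedy chain *)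

Lemma sorted_geq_count (s : seq nat) j i : sorted geq s -> 0 < j -> 0 < i ->
  (j <= nth 0 s i.-1) = (i <= count (fun x => j <= x) s).
Proof.
elim: s i => [|x s ih] i hs hj hi; first by rewrite nth_nil /=; lia.
have hs' : sorted geq s := path_sorted hs.
have le_x y : y \in s -> y <= x.
  by move=> ys; have /allP := order_path_min (fun _ _ _ h1 h2 => leq_trans h2 h1) hs; apply.
case: (leqP j x) => [le_jx|lt_xj].
  case: i hi => [|[|i]] // _ /=; rewrite le_jx //.
  by rewrite (ih i.+1) //= add1n ltnS.
have -> /= : count (fun y => j <= y) (x :: s) = 0.
  by apply/eqP; rewrite -leqn0 leqNgt -has_count; apply/hasPn => y /predU1P[->|/le_x]; lia.
case: i hi => [|[|i]] // _; first by rewrite leqNgt lt_xj.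
case: (ltnP i (size s)) => [lt_is|le_si]; last by rewrite nth_default //; lia.
by have := le_x _ (mem_nth 0 lt_is); rewrite /=; lia.
Qed.

Section Tableau.
Variables (n : nat) (la : seq nat) (T : nat -> nat -> nat).
Hypotheses (la_shape : good_shape n la) (T_ss : semistandard n la T).

Lemma in_shapeE j i : 0 < j -> in_shape la j i = (0 < i <= collen la j).
Proof.
move=> hj; case: la_shape => _ la_sorted _ _.
rewrite /in_shape /lam /collen hj andbT.
by case: (posnP i) => [->//|hi] /=; rewrite sorted_geq_count.
Qed.

Lemma collen_le j : collen la j <= n.
Proof. by case: la_shape => <- _ _ _; apply: count_size. Qed.

Lemma collen_mono j j' : j <= j' -> collen la j' <= collen la j.
Proof. by move=> h; apply: sub_count => x /=; lia. Qed.

Lemma tableau_range j i : 0 < j -> 0 < i <= collen la j -> 0 < T j i <= n.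
Proof. by case: T_ss => range _ _ hj hi; apply: range; rewrite in_shapeE. Qed.

Lemma tableau_row_le j i : 0 < j -> 0 < i <= collen la j.+1 -> T j i <= T j.+1 i.
Proof. by case: T_ss => _ row _ hj hi; apply: row; rewrite in_shapeE. Qed.

Lemma tableau_col_lt j q i : 0 < j -> 0 < q -> q < i -> i <= collen la j -> T j q < T j i.
Proof.
case: T_ss => _ _ col hj hq; elim: i => // i ih lt_qi le_ic.
have step : T j i < T j i.+1 by apply: col; rewrite in_shapeE //; lia.
case: (ltngtP q i) => [lt_qi'|lt_iq|-> //]; last lia.
by have := ih lt_qi' ltac:(lia); lia.
Qed.

Lemma size_column j : size (column la T j) = collen la j.
Proof. by rewrite size_map size_iota. Qed.

Lemma nth_column j q : 0 < q <= collen la j -> nth 0 (column la T j) q.-1 = T j q.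
Proof.
by move=> hq; rewrite (nth_map 0) ?size_iota ?nth_iota; [congr T; lia|lia|lia].
Qed.

Lemma mem_column j i : 0 < i <= collen la j -> T j i \in column la T j.
Proof. by move=> hi; apply: map_f; rewrite mem_iota; lia. Qed.

Lemma column_range j x : 0 < j -> x \in column la T j -> 0 < x <= n.
Proof. by move=> hj /mapP[q]; rewrite mem_iota => hq ->; apply: tableau_range; lia. Qed.

Lemma column_sorted j : 0 < j -> sorted ltn (column la T j).
Proof.
move=> hj; rewrite sorted_map.
apply: (@sub_in_sorted _ (fun q => q \in iota 1 (collen la j))); last exact: iota_ltn_sorted.
- by move=> q q'; rewrite !mem_iota => hq hq' /= lt_qq'; apply: tableau_col_lt; lia.
- by apply/allP.
Qed.

Lemma count_lt_column j i (v : seq nat) : 0 < j -> 0 < i <= collen la j -> uniq v ->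
  v =i column la T j -> count (fun x => x < T j i) v <= i.-1.
Proof.
move=> hj hi v_uniq vE; rewrite -size_filter.
have -> : i.-1 = size [seq T j q | q <- iota 1 i.-1] by rewrite size_map size_iota.
apply: uniq_leq_size; first exact: filter_uniq.
move=> x; rewrite mem_filter vE => /andP[+ /mapP[q]]; rewrite mem_iota => + hq xE.
rewrite xE => lt_x; apply: map_f; rewrite mem_iota.
case: (ltngtP q i) lt_x => [|lt_iq|->]; [lia| |by rewrite ltnn].
by have := @tableau_col_lt j i q hj ltac:(lia) lt_iq ltac:(lia); lia.
Qed.

End Tableau.

Lemma count_take_sorted_le (s X : seq nat) a : sorted ltn s -> uniq X -> {subset X <= s} ->
  count (fun x => a <= x) (take (size X) s) <= count (fun x => a <= x) X.
Proof.
elim: s X => [|y s ih] X hs X_uniq X_sub //.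
have hs' : sorted ltn s := path_sorted hs.
have lt_y z : z \in s -> y < z by move=> zs; have /allP := order_path_min ltn_trans hs; apply.
case: (boolP (y \in X)) => [yX|yNX].
  have hp := perm_to_rem yX; rewrite (seq.permP hp) (perm_size hp) /= leq_add2l.
  apply: ih => // [|x]; first exact: rem_uniq.
  by rewrite (mem_rem_uniq _ X_uniq) => /andP[xy /X_sub]; rewrite in_cons (negbTE xy).
have X_sub' : {subset X <= s}.
  by move=> x xX; move: (X_sub x xX); rewrite in_cons => /predU1P[xy|//]; rewrite -xy xX in yNX.
case: (posnP (size X)) => [->|X_pos]; first by rewrite take0.
rewrite -(prednK X_pos) /=; case: (leqP a y) => [le_ay|lt_ya] /=.
  have /eqP -> : count (fun x => a <= x) X == size X.
    by rewrite -all_count; apply/allP => x /X_sub' /lt_y; lia.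
  by have := count_size (fun x => a <= x) (take (size X).-1 s); rewrite size_take_min; lia.
apply: leq_trans (ih X hs' X_uniq X_sub').
rewrite -[Y in _ <= count _ Y](cat_take_drop (size X).-1) count_cat take_takel ?leq_addr //.
exact: leq_pred.
Qed.

Lemma dominated_sorted s s' : sorted ltn s -> perm_eq s' s -> dominated s s'.
Proof.
move=> hs hp k a; have s'_uniq : uniq s' by rewrite (perm_uniq hp) (sorted_uniq ltn_trans ltnn).
have := @count_take_sorted_le s (take k s') a hs (take_uniq _ s'_uniq).
rewrite size_take_min (perm_size hp) take_min take_size; apply.
by move=> x /mem_take; rewrite (perm_mem hp).
Qed.

Lemma dominated_sorted_cat A B A' B' : sorted ltn A -> sorted ltn B ->
  perm_eq A' A -> perm_eq B' B -> dominated (A ++ B) (A' ++ B').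
Proof.
move=> hA hB pA pB k a; rewrite /rank_ge !take_cat (perm_size pA).
case: ifP => _; first exact: dominated_sorted.
by rewrite !count_cat (seq.permP pA) leq_add2l; apply: dominated_sorted.
Qed.

Section GreedyInit.
Variables (n : nat) (la : seq nat) (T : nat -> nat -> nat).
Hypotheses (la_shape : good_shape n la) (T_ss : semistandard n la T).
Local Notation C1 := (column la T 1).
Local Notation rest := [seq k <- iota 1 n | k \notin C1].

Let C1_sorted : sorted ltn C1 := column_sorted la_shape T_ss (ltn0Sn 0).

Let C1_uniq : uniq C1 := sorted_uniq ltn_trans ltnn C1_sorted.

Lemma greedy_initE : greedy_init n la T = C1 ++ sort leq rest.
Proof.
rewrite /greedy_init sorted_sort //; first exact: leq_trans.
by move: C1_sorted; rewrite ltn_sorted_uniq_leq => /andP[].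
Qed.

Lemma perm_seq_greedy_init : is_perm_seq n (greedy_init n la T).
Proof.
rewrite greedy_initE /is_perm_seq perm_sym -(perm_filterC (fun x => x \in C1)) perm_sym.
apply: perm_cat; last by rewrite perm_sort.
apply: uniq_perm; rewrite ?filter_uniq ?iota_uniq // => x.
rewrite mem_filter mem_iota /=; case xC1: (x \in C1) => //=.
by have := column_range la_shape T_ss (ltn0Sn 0) xC1; lia.
Qed.

Lemma pos_greedy_init q : 0 < q <= collen la 1 -> pos (greedy_init n la T) q = T 1 q.
Proof.
move=> hq; rewrite greedy_initE /pos nth_cat size_column ifT; last lia.
exact: nth_column.
Qed.

Lemma greedy_init_dominated u : is_perm_seq n u -> take (collen la 1) u =i C1 ->
  dominated (greedy_init n la T) u.
Proof.
move=> hu uC1; have := perm_seq_uniq hu.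
rewrite greedy_initE -(cat_take_drop (collen la 1) u) cat_uniq.
case/and3P=> head_uniq head_tail_disjoint tail_uniq.
apply: dominated_sorted_cat => //.
- by rewrite ltn_sorted_uniq_leq sort_uniq filter_uniq ?iota_uniq ?sort_sorted //; exact: leq_total.
- exact: uniq_perm.
rewrite perm_sym perm_sort; apply: uniq_perm; rewrite ?filter_uniq ?iota_uniq // => x.
have xu : (1 <= x < 1 + n) = (x \in take (collen la 1) u) || (x \in drop (collen la 1) u).
  by rewrite -mem_cat cat_take_drop (mem_perm_seq hu); apply/idP/idP; lia.
rewrite mem_filter mem_iota xu -uC1.
case: (boolP (x \in take _ u)) => //= xt; apply/esym/negbTE.
by apply: contra head_tail_disjoint => xd; apply/hasP; exists x.
Qed.

End GreedyInit.

Section GreedyColumn.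
Variables (n : nat) (la : seq nat) (T : nat -> nat -> nat).
Hypotheses (la_shape : good_shape n la) (T_ss : semistandard n la T).
Variables (j : nat) (rho0 : seq nat).
Hypothesis j_gt1 : 1 < j.
Local Notation c := (collen la j).

Definition column_invariant i rho :=
  [/\ is_perm_seq n rho, forall q, 0 < q <= i -> pos rho q = T j.-1 q,
      forall q, i < q <= c -> pos rho q = T j q,
      bruhat_le (perm_of_seq n rho0) (perm_of_seq n rho) &
      forall u, is_perm_seq n u -> take c u =i column la T j ->
        dominated rho0 u -> dominated rho u].

Lemma column_invariant_step i rho : i < c -> column_invariant i.+1 rho ->
  column_invariant i (greedy_step n la T j rho i.+1).
Proof.
move=> lt_ic [hrho done_rows todo_rows le_rho dom_rho].
have c_le : c <= collen la j.-1 by apply: collen_mono; lia.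
have c_le_n : c <= n := collen_le la_shape j.
have jE : j.-1.+1 = j by lia.
have posE : pos rho i.+1 = T j.-1 i.+1 by apply: done_rows; lia.
have t_range : 0 < T j i.+1 <= n by apply: (tableau_range la_shape T_ss); lia.
have ready : swap_ready n c i.+1 (T j i.+1) rho.
  split=> // [|q hq|q hq]; rewrite ?posE.
  - by have := @tableau_row_le _ _ _ la_shape T_ss j.-1 i.+1; rewrite jE; apply; lia.
  - by rewrite done_rows; [apply: (tableau_col_lt la_shape T_ss)|]; lia.
  - by rewrite todo_rows; [apply: (tableau_col_lt la_shape T_ss)|]; lia.
rewrite greedy_step_swaps ?(size_perm_seq hrho) //; try lia.
have r_range : 0 < i.+1 <= c by lia.
have [hperm hfix hrow hle] := greedy_swaps_spec (f := n) r_range c_le_n t_range ready ltac:(lia).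
split=> // [q hq|q hq||u hu uC dom0].
- by rewrite hfix; [apply: done_rows|lia|apply/eqP]; lia.
- by case: (eqVneq q i.+1) => [->//|ne]; rewrite hfix //; [apply: todo_rows|]; lia.
- exact: bruhat_le_trans le_rho hle.
apply: (greedy_swaps_dominated r_range c_le_n t_range) => //; last exact: dom_rho.
- by rewrite uC; apply: mem_column; lia.
apply: (count_lt_column la_shape T_ss) => //; try lia; last exact: take_uniq (perm_seq_uniq hu).
Qed.

Lemma column_invariant_fold i rho : i <= c -> column_invariant i rho ->
  column_invariant 0 (foldl (greedy_step n la T j) rho (rev (iota 1 i))).
Proof.
elim: i rho => // i ih rho le_ic inv.
rewrite -[i.+1]addn1 iotaD add1n cats1 rev_rcons /=.
by apply: ih; [lia|apply: column_invariant_step].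
Qed.

End GreedyColumn.

Lemma filter_iota_lt c m : [seq x <- iota 0 m | x < c] = iota 0 (minn c m).
Proof.
rewrite -{1}(subnKC (geq_minr c m)) iotaD filter_cat add0n.
rewrite [X in _ ++ X](_ : _ = [::]); last first.
  apply/eqP; rewrite -size_eq0 size_filter -leqn0 leqNgt -has_count.
  by apply/hasPn => x; rewrite mem_iota /=; lia.
by rewrite cats0; apply/all_filterP/allP => x; rewrite mem_iota; lia.
Qed.

Lemma first_entriesE n (w : 'S_n) c : first_entries w c = take c (oneline w).
Proof.
rewrite /first_entries /oneline -map_take; congr map; apply: (inj_map val_inj).
by rewrite map_take val_enum_ord take_iota -filter_iota_lt -val_enum_ord filter_map.
Qed.

Section Greedy.
Variables (n : nat) (la : seq nat) (T : nat -> nat -> nat).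
Hypotheses (la_shape : good_shape n la) (T_ss : semistandard n la T).
Local Notation G := (greedy n la T).

Lemma column_invariant_greedy j : 0 < j -> is_perm_seq n (G j) ->
  (forall q, 0 < q <= collen la j -> pos (G j) q = T j q) ->
  column_invariant n la T j.+1 (G j) 0 (G j.+1).
Proof.
move=> hj hperm hpos; have -> : G j.+1 = greedy_col n la T j.+1 (G j) by case: j hj hperm hpos.
apply: column_invariant_fold => //.
have le_c : collen la j.+1 <= collen la j by apply: collen_mono.
by split=> // [q hq|q|]; [apply: hpos; lia|lia|constructor].
Qed.

Lemma greedy_spec j : 0 < j ->
  is_perm_seq n (G j) /\ forall q, 0 < q <= collen la j -> pos (G j) q = T j q.
Proof.
elim: j => // [[_ _|j ih _]]; first by split; [apply: perm_seq_greedy_init|apply: pos_greedy_init].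
have [hperm hpos] := ih isT.
by have [? _ ? _ _] := column_invariant_greedy (ltn0Sn j) hperm hpos.
Qed.

Lemma take_greedy j : 0 < j -> take (collen la j) (G j) = column la T j.
Proof.
move=> hj; have [hperm hpos] := greedy_spec hj; have c_le_n := collen_le la_shape j.
apply: (@eq_from_nth _ 0) => [|q]; rewrite size_take_min (size_perm_seq hperm) ?size_column //.
  exact/minn_idPl.
move=> hq; rewrite nth_take; last lia.
rewrite -[nth 0 (G j) q]/(pos (G j) q.+1) hpos; last lia.
by symmetry; apply: (@nth_column _ _ _ q.+1); lia.
Qed.

Lemma greedy_defining_chain : defining_chain la T (fun j => perm_of_seq n (G j)).
Proof.
split=> [j hj _|j /andP[hj _]].
  have [hperm hpos] := greedy_spec hj.
  by have [] := column_invariant_greedy hj hperm hpos.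
by rewrite first_entriesE perm_of_seqK ?take_greedy //; case: (greedy_spec hj).
Qed.

Lemma greedy_dominated (w : nat -> 'S_n) : defining_chain la T w ->
  forall j, 1 <= j <= lam1 la -> dominated (G j) (oneline (w j)).
Proof.
move=> [w_bruhat w_cols]; elim=> // j ih /andP[hj le_j].
have w_col : take (collen la j.+1) (oneline (w j.+1)) =i column la T j.+1.
  by move=> x; rewrite -first_entriesE w_cols //; lia.
case: j ih hj le_j w_col => [_ _ _|j ih _ le_j] w_col.
  by apply: greedy_init_dominated => //; exact: oneline_perm_seq.
have [hperm hpos] := greedy_spec (ltn0Sn j).
have [_ _ _ _ dom] := column_invariant_greedy (ltn0Sn j) hperm hpos.
apply: dom w_col _; first exact: oneline_perm_seq.
apply: dominated_trans (ih _) (bruhat_le_dominated (w_bruhat _ _ _)); lia.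
Qed.

End Greedy.

Theorem proposition6p1 (n : nat) (la : seq nat) (T : nat -> nat -> nat)
    (w : nat -> 'S_n) :
  0 < n -> good_shape n la -> semistandard n la T ->
  minimal_defining_chain la T w ->
  forall j, 1 <= j <= lam1 la -> oneline (w j) = greedy n la T j.
Proof.
move=> _ la_shape T_ss [w_chain w_min] j hj.
have [G_perm _] := greedy_spec la_shape T_ss (proj1 (andP hj)).
apply: dominated_antisym; first by rewrite size_oneline (size_perm_seq G_perm).
- rewrite -(perm_of_seqK G_perm); apply: bruhat_le_dominated.
  exact: w_min (greedy_defining_chain la_shape T_ss) j hj.
- exact: greedy_dominated.
Qed.
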